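(* Let $G$ be the non-abelian group of order $27$ and exponent $3$, and let $U_1$, $U_2$ be short $3$-sequences over $G$, neither of central type. Then: (a) if the terms of $U_1\cdot U_2$ lie in four distinct non-central $z$-classes, then $U_1\cdot U_2$ is an EGZ sequence; (b) if the terms of $U_1\cdot U_2$ lie in at least two distinct non-central $z$-classes and at least one of $U_1,U_2$ is of thick type, then $U_1\cdot U_2$ is an EGZ sequence; (c) moreover, if $g_1,g_2,g_3,g_4\in G\setminus Z(G)$ and $u\in Z(G)$ are such that $g_1$ and $g_3$ lie in distinct $z$-classes and $g_1g_2,\ g_3g_4\in Z(G)$, then there is a permutation $\sigma$ of $\{1,2,3,4\}$ with $g_{\sigma(1)}g_{\sigma(2)}g_{\sigma(3)}g_{\sigma(4)}u=1$.
   Context: $G$ is the Heisenberg group of order $27$ and exponent $3$; $Z(G)=[G,G]$ has order $3$. For $g\in G\setminus Z(G)$ its $z$-class is $\mathcal{K}[g]=\{g^\lambda u: \lambda\in\{1,2\},\ u\in Z(G)\}=C_G(g)\setminus Z(G)$; there are four non-central $z$-classes. Sequences are finite unordered multisets of elements; $U_1\cdot U_2$ denotes concatenation. A sequence $g_1\cdot\dotsc\cdot g_\ell$ has central product if $g_1\cdots g_\ell\in Z(G)$ (independent of ordering). A short $3$-sequence is a sequence $x_1\cdot x_2\cdot x_3$ with $x_1x_2x_3\in Z(G)$; it is of central type if all $x_i\in Z(G)$; thin type if exactly two terms are non-central; thick type A if all three terms are non-central and pairwise conjugate; thick type B if all three are non-central and it is not thick type A; thick type means thick type A or B. An EGZ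 sequence is a sequence $T$ with central product containing three terms which can be labelled $h_1,h_2,h_3$ so that $h_3$ commutes with none of $h_1$, $h_2$, $h_1h_2$. *)

From mathcomp Require Import all_boot all_fingroup all_solvable.
Set Implicit Arguments. Unset Strict Implicit. Unset Printing Implicit Defensive.
Import GroupScope.

(* Sequences over G are represented by [seq gT]; all notions below are
   invariant under permutation of the terms, so they are notions on
   (unordered) multisets. *)
Section Defs.
Variable gT : finGroupType.
Variable G : {group gT}.

Definition zclass (g : gT) : {set gT} :=
  [set x in G | [exists u in 'Z(G), (x == g * u) || (x == g ^+ 2 * u)]].

Definition noncentral (x : gT) : bool := x \notin 'Z(G).

Definition zclasses_of (s : seq gT) : {set {set gT}} :=
  [set zclass x | x in [seq y <- s | noncentral y]].

Definition seq_over (s : seq gT) : bool := all (fun x => x \in G) s.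

Definition central_product (s : seq gT) : bool := (\prod_(x <- s) x)%g \in 'Z(G).

Definition short3 (s : seq gT) : bool :=
  [&& size s == 3, seq_over s & central_product s].

Definition central_type (s : seq gT) : bool := all (fun x => x \in 'Z(G)) s.
Definition thin_type (s : seq gT) : bool := count noncentral s == 2.
Definition thickA_type (s : seq gT) : bool :=
  all noncentral s && all (fun x => all (fun y => y \in x ^: G) s) s.
Definition thickB_type (s : seq gT) : bool :=
  all noncentral s && ~~ thickA_type s.
Definition thick_type (s : seq gT) : bool := thickA_type s || thickB_type s.

Definition EGZ (T : seq gT) : Prop :=
  seq_over T /\ central_product T /\
  exists i j k : 'I_(size T),
    [/\ i != j, i != k, j != k &
      let h1 := nth 1 T i in let h2 := nth 1 T j in let h3 := nth 1 T k in
      [/\ ~ commute h3 h1, ~ commute h3 h2 & ~ commute h3 (h1 * h2)]].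
End Defs.

From mathcomp Require Import all_boot all_fingroup all_solvable.
Import GroupScope.
Set Implicit Arguments. Unset Strict Implicit. Unset Printing Implicit Defensive.

(* G is extraspecial of order 27, so the centraliser of a non-central x is the
   abelian group <x>Z(G) of order 9: commutation is an equivalence relation on
   G \ Z(G) whose classes are exactly the z-classes.  In a thick triple a b c
   (non-central terms, central product) c lies in (ab)^-1 Z(G), so either all
   three pairs commute or none does.  Parts (a) and (b) are case analyses on
   these commutation patterns that exhibit h1, h2, h3 explicitly.  For (c),
   write g2 = g1^-1 z with z central: the products g1g2g3g4, g1g3g2g4 and
   g2g3g1g4 are g3^h z g4 for h = 1, g1^-1, g1, and these three conjugates of
   g3 are distinct elements of the coset g3 Z(G) of size 3, so one of the
   products is u^-1. *)

Section GroupFacts.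
Variable gT : finGroupType.
Implicit Types x y z : gT.

Lemma commute_mulKr x y z : commute x z -> commute x (y * z) -> commute x y.
Proof. by move=> cxz cxyz; rewrite -(mulgK z y); apply/commuteM/commuteV. Qed.

Lemma perm4_reorder (g1 g2 g3 g4 : gT) :
  let prod_perm (s : 'S_4) := \prod_(i < 4) nth 1 [:: g1; g2; g3; g4] (s i) in
  [/\ prod_perm 1 = g1 * g2 * g3 * g4,
      exists s, prod_perm s = g1 * g3 * g2 * g4 &
      exists s, prod_perm s = g2 * g3 * g1 * g4].
Proof.
pose i1 : 'I_4 := @Ordinal 4 1 isT; pose i2 : 'I_4 := @Ordinal 4 2 isT.
split; [| exists (tperm i1 i2) | exists (tperm ord0 i1 * tperm ord0 i2)];
  by rewrite !big_ord_recr big_ord0 /= mul1g ?permM !permE.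
Qed.

End GroupFacts.

Section EGZTriple.
Variables (gT : finGroupType) (G : {group gT}).

Definition egz_triple (h1 h2 h3 : gT) :=
  [/\ ~ commute h3 h1, ~ commute h3 h2 & ~ commute h3 (h1 * h2)].

Lemma egz_nth T i j k : seq_over G T -> central_product G T ->
  (i < size T)%N -> (j < size T)%N -> (k < size T)%N -> i != j ->
  egz_triple (nth 1 T i) (nth 1 T j) (nth 1 T k) -> EGZ G T.
Proof.
move=> sT cT hi hj hk ij egz; do 2!split=> //; have [nki nkj _] := egz.
exists (Ordinal hi), (Ordinal hj), (Ordinal hk); split=> //.
- by apply: contra_not_neq nki => -[->]; apply: commute_refl.
- by apply: contra_not_neq nkj => -[->]; apply: commute_refl.
Qed.

End EGZTriple.

Section ExtraspecialOrder27.
Variables (gT : finGroupType) (G : {group gT}).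
Hypotheses (oG : #|G| = 27) (expG : exponent G = 3) (nabG : ~~ abelian G).
Local Notation Z := 'Z(G).
Implicit Types x y z u : gT.

Lemma extraspecialG : extraspecial G.
Proof. by apply: (@p3group_extraspecial 3); rewrite ?oG // /pgroup oG. Qed.

Lemma card_center : #|Z| = 3.
Proof. by apply: card_center_extraspecial extraspecialG; rewrite /pgroup oG. Qed.

Lemma commg_center x y : x \in G -> y \in G -> [~ x, y] \in Z.
Proof.
by move=> xG yG; have [[_ <-] _] := extraspecialG; rewrite derg1 mem_commg.
Qed.

Lemma expg3 x : x \in G -> x ^+ 3 = 1.
Proof. by move=> xG; rewrite -expG expg_exponent. Qed.

Lemma center_commute x z : x \in G -> z \in Z -> commute x z.
Proof. by move=> xG /centerP[_ cGz]; apply/commute_sym/cGz. Qed.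

Lemma commute_sqr x y : y \in G -> commute x (y ^+ 2) -> commute x y.
Proof.
by move=> yG /(commuteX 2); rewrite -expgM (expgD y 3 1) expg3 // mul1g expg1.
Qed.

Lemma order_noncentral x : x \in G :\: Z -> #[x] = 3.
Proof.
case/setDP=> xG xZ; apply/prime_nt_dvdP; rewrite ?order_dvdn ?expg3 //.
by rewrite order_eq1; apply: contraNneq xZ => ->.
Qed.

Lemma cent1_noncentral x : x \in G :\: Z -> 'C_G[x] = <[x]> * Z.
Proof.
move=> xGZ; have /setDP[xG xZ] := xGZ.
have sxZC : <[x]> * Z \subset 'C_G[x].
  apply: mul_subG; first by rewrite cycle_subG inE xG cent1id.
  apply/subsetP=> z zZ; rewrite inE (subsetP (center_sub G) z zZ).
  by apply/cent1P/commute_sym/center_commute.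
have oxZ : #|<[x]> * Z| = 9.
  have tixZ : <[x]> :&: Z = 1.
    by apply: prime_TIg; rewrite ?cycle_subG -?orderE ?order_noncentral.
  have := mul_cardG <[x]> Z; rewrite tixZ cards1 muln1 -orderE order_noncentral //.
  by rewrite card_center => <-.
apply/esym/eqP; rewrite eqEcard sxZC oxZ /=.
have: #|'C_G[x]| %| 27 by rewrite -oG cardSg ?subsetIl.
rewrite (_ : 27 = 3 ^ 3)%N // => /dvdn_pfactor[] // [|[|[|[|k]]]] // _ oC;
  rewrite oC //.
have CG : 'C_G[x] = G by apply/eqP; rewrite eqEcard subsetIl oC oG.
case/negP: xZ; apply/centerP; split=> // y yG.
by apply/commute_sym/cent1P; move: yG; rewrite -CG => /setIP[].
Qed.

Lemma abelian_cent1_noncentral x : x \in G :\: Z -> abelian 'C_G[x].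
Proof.
move=> xGZ; have /setDP[xG _] := xGZ.
rewrite cent1_noncentral // abelianM cycle_abelian center_abelian centsC.
by rewrite cycle_subG; apply/centP=> z; apply: center_commute.
Qed.

Lemma commute_noncentral_trans x y z : x \in G :\: Z -> y \in G -> z \in G ->
  commute y x -> commute z x -> commute y z.
Proof.
move=> xGZ yG zG /cent1P yx /cent1P zx.
by apply: (centsP (abelian_cent1_noncentral xGZ)); rewrite inE ?yG ?zG.
Qed.

Lemma cent1_noncentralP x y : x \in G :\: Z -> y \in 'C_G[x] :\: Z ->
  exists2 u, u \in Z & y = x * u \/ y = x ^+ 2 * u.
Proof.
move=> xGZ /setDP[]; rewrite cent1_noncentral // => /mulsgP[_ u /cycleP[i ->] uZ ->].
rewrite -expg_mod_order order_noncentral //.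
have : (i %% 3 < 3)%N by rewrite ltn_mod.
case: (i %% 3)%N => [|[|[|//]]] _ yZ; first by rewrite expg0 mul1g uZ in yZ.
  by exists u; [|left; rewrite expg1].
by exists u; [|right].
Qed.

Lemma zclass_cent1 x : x \in G :\: Z -> zclass G x = 'C_G[x] :\: Z.
Proof.
move=> xGZ; have /setDP[xG xZ] := xGZ.
apply/setP=> y; apply/idP/idP => [|yCZ]; last first.
  have [/setIP[yG _] _] := setDP yCZ.
  have [u uZ yE] := cent1_noncentralP xGZ yCZ.
  by rewrite inE yG; apply/existsP; exists u; case: yE => ->; rewrite uZ eqxx ?orbT.
rewrite inE => /andP[yG /existsP[u /andP[uZ yE]]].
have [i i12 {}yE] : exists2 i, (i * i == 1 %[mod 3])%N & y = x ^+ i * u.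
  by case/orP: yE => /eqP->; [exists 1%N | exists 2%N].
subst y; rewrite in_setD; apply/andP; split; last first.
  apply/subcent1P; split=> //.
  by apply: commuteM; [apply: commuteX | apply: center_commute].
have xii : x ^+ i ^+ i = x.
  by rewrite -expgM -expg_mod_order order_noncentral // (eqP i12) expg1.
apply: contra xZ => xiuZ; rewrite -xii groupX //.
by rewrite -(mulgK u (x ^+ i)) groupM ?groupV.
Qed.

Lemma zclass_commute x y : x \in G :\: Z -> y \in G :\: Z -> commute x y ->
  zclass G x = zclass G y.
Proof.
have sCC a b : a \in G :\: Z -> b \in G -> commute a b -> 'C_G[a] \subset 'C_G[b].
  move=> aGZ bG cab; apply/subsetP=> z /subcent1P[zG caz]; apply/subcent1P.
  by split; last apply: (commute_noncentral_trans aGZ).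
move=> xGZ yGZ cxy; have /setDP[xG _] := xGZ; have /setDP[yG _] := yGZ.
rewrite !zclass_cent1 //; congr (_ :\: _); apply/eqP.
by rewrite eqEsubset !sCC.
Qed.

Lemma noncommute_zclass x y : x \in G :\: Z -> y \in G :\: Z ->
  zclass G x != zclass G y -> ~ commute x y.
Proof. by move=> xGZ yGZ /eqP nxy cxy; apply/nxy/zclass_commute. Qed.

Lemma noncommute_mul_notin_center x y : x \in G -> ~ commute x y -> x * y \notin Z.
Proof.
move=> xG nxy; apply: contra_notN nxy => xyZ; rewrite -(mulKg x y).
by apply: commuteM; [apply/commuteV/commute_refl | apply: center_commute].
Qed.

Lemma egz_triple_four x1 x2 x3 x4 : x1 \in G -> x2 \in G -> x3 \in G -> x4 \in G ->
  ~ commute x1 x2 -> ~ commute x1 x3 -> ~ commute x1 x4 ->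
  ~ commute x2 x3 -> ~ commute x2 x4 -> ~ commute x3 x4 ->
  egz_triple x1 x2 x3 \/ egz_triple x1 x2 x4.
Proof.
move=> x1G x2G x3G x4G n12 n13 n14 n23 n24 n34.
have x12GZ : x1 * x2 \in G :\: Z by rewrite inE noncommute_mul_notin_center ?groupM.
have [c312 | /eqP n312] := eqVneq (x3 * (x1 * x2)) (x1 * x2 * x3).
  right; split=> [/commute_sym // | /commute_sym // | c412]; apply: n34.
  exact: commute_noncentral_trans x12GZ x3G x4G c312 c412.
by left; split=> // /commute_sym.
Qed.

Definition thick_triple a b c :=
  [&& a \in G :\: Z, b \in G :\: Z, c \in G :\: Z & a * b * c \in Z].

Section ThickTriple.
Variables a b c : gT.
Hypothesis tabc : thick_triple a b c.

Lemma thick_triple_rot : thick_triple b c a.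
Proof.
case/and4P: tabc => aGZ bGZ cGZ abcZ; rewrite /thick_triple bGZ cGZ aGZ /=.
have /setDP[aG _] := aGZ.
have abc_bca : a * (b * c) = b * (c * a).
  by apply: (mulgI a); have := center_commute aG abcZ; rewrite /commute -!mulgA.
by rewrite -mulgA -abc_bca mulgA.
Qed.

Lemma thick_triple_mem : [/\ a \in G, b \in G & c \in G].
Proof. by case/and4P: tabc => /setDP[? _] /setDP[? _] /setDP[? _]. Qed.

Lemma commute_thick_triple x : x \in G -> commute x c <-> commute x (a * b).
Proof.
case/and4P: tabc => _ _ _ abcZ xG; rewrite -[c in commute x c](mulKg (a * b)).
have cxabc := center_commute xG abcZ; split=> [|cxab].
  by move/(commute_mulKr cxabc)/commuteV; rewrite invgK.
by apply: commuteM => //; apply: commuteV.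
Qed.

Lemma thick_triple_mul_notin_center : a * b \notin Z.
Proof.
case/and4P: tabc => _ _ /setDP[_ cZ] abcZ; apply: contra cZ => abZ.
by rewrite -(mulKg (a * b) c) groupM ?groupV.
Qed.

Lemma thick_triple_commute_rot : commute a b -> commute b c.
Proof.
have [_ bG _] := thick_triple_mem => cab; apply/(commute_thick_triple bG).
by apply: commuteM; [apply: commute_sym | apply: commute_refl].
Qed.

End ThickTriple.

Lemma thick_triple_noncommute_rot a b c :
  thick_triple a b c -> ~ commute a b -> ~ commute b c.
Proof.
move=> tabc nab cbc; apply: nab; have tbca := thick_triple_rot tabc.
exact: thick_triple_commute_rot (thick_triple_rot tbca) (thick_triple_commute_rot tbca cbc).
Qed.

Lemma egz_triple_thick_commute a b c d : thick_triple a b c -> commute a b ->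
  d \in G -> ~ commute d a -> egz_triple a b d.
Proof.
move=> tabc cab dG nda; have [aG bG _] := thick_triple_mem tabc.
have /and4P[_ bGZ _ _] := tabc.
have abGZ : a * b \in G :\: Z by rewrite inE (thick_triple_mul_notin_center tabc) groupM.
split=> // [cdb | cdab]; apply: nda.
  exact: commute_noncentral_trans bGZ dG aG cdb cab.
by apply: (commute_noncentral_trans abGZ) => //; apply: commuteM (commute_refl a) cab.
Qed.

Lemma egz_triple_thick_noncommute a b c d : thick_triple a b c -> d \in G ->
  ~ commute d a -> ~ commute d b -> ~ commute d c -> egz_triple a b d.
Proof. by move=> tabc dG nda ndb ndc; split=> // /(commute_thick_triple tabc dG). Qed.

Lemma egz_triple_thick_cent a b c d : thick_triple a b c -> ~ commute a b ->
  d \in G :\: Z -> commute d a -> egz_triple a d b \/ egz_triple b d c.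
Proof.
move=> tabc nab dGZ cda; have [aG bG cG] := thick_triple_mem tabc.
have /and4P[aGZ _ _ _] := tabc; have /setDP[dG _] := dGZ.
have nbc := thick_triple_noncommute_rot tabc nab.
have nca := thick_triple_noncommute_rot (thick_triple_rot tabc) nbc.
have dCZ : d \in 'C_G[a] :\: Z.
  by case/setDP: dGZ => _ dZ; rewrite in_setD dZ; apply/subcent1P; split=> //; apply: commute_sym.
have [u uZ [->|->]] := cent1_noncentralP aGZ dCZ.
  have cbu := center_commute bG uZ.
  have nba : ~ commute b a by move/commute_sym.
  left; split=> // [/(commute_mulKr cbu) // |].
  by rewrite mulgA => /(commute_mulKr cbu)/(commute_sqr aG).
have ccu := center_commute cG uZ.
right; split=> [/commute_sym // | /(commute_mulKr ccu)/(commute_sqr aG) // | ].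
(* [a * b] commutes with [b * a ^+ 2], hence with [b * a ^+ 2 * (a * b) = b ^+ 2]. *)
rewrite mulgA => /(commute_mulKr ccu)/commute_sym.
move/(commute_thick_triple tabc (groupM bG (groupX 2 aG)))/commute_sym => cab_ba2.
have : commute (a * b) (b * a ^+ 2 * (a * b)) by apply: commuteM cab_ba2 (commute_refl _).
have -> : b * a ^+ 2 * (a * b) = b ^+ 2 by rewrite mulgA -(mulgA b) -expgSr expg3 ?mulg1.
move/(commute_sqr bG)/commute_sym/(commute_mulKr (commute_refl b)) => cba.
by apply: nab; apply: commute_sym.
Qed.

Lemma egz_triple_thick_noncentral a b c d : thick_triple a b c -> ~ commute a b ->
  d \in G :\: Z ->
  [\/ egz_triple a d b, egz_triple b d c, egz_triple c d a | egz_triple a b d].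
Proof.
move=> tabc nab dGZ; have /setDP[dG _] := dGZ.
have tbca := thick_triple_rot tabc; have tcab := thick_triple_rot tbca.
have nbc := thick_triple_noncommute_rot tabc nab.
have nca := thick_triple_noncommute_rot tbca nbc.
have [cda | /eqP nda] := eqVneq (d * a) (a * d).
  by case: (egz_triple_thick_cent tabc nab dGZ cda); [constructor 1 | constructor 2].
have [cdb | /eqP ndb] := eqVneq (d * b) (b * d).
  by case: (egz_triple_thick_cent tbca nbc dGZ cdb); [constructor 2 | constructor 3].
have [cdc | /eqP ndc] := eqVneq (d * c) (c * d).
  by case: (egz_triple_thick_cent tcab nca dGZ cdc); [constructor 3 | constructor 1].
by constructor 4; apply: (egz_triple_thick_noncommute tabc).
Qed.

Lemma egz_triple_thick_commute_pair a b c x y : thick_triple a b c -> commute a b ->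
  x \in G -> y \in G -> ~ commute x y -> egz_triple a b x \/ egz_triple a b y.
Proof.
move=> tabc cab xG yG nxy; have /and4P[aGZ _ _ _] := tabc.
have [cxa | /eqP nxa] := eqVneq (x * a) (a * x).
  right; apply: (egz_triple_thick_commute tabc) => // cya.
  exact/nxy/(commute_noncentral_trans aGZ).
by left; apply: (egz_triple_thick_commute tabc).
Qed.

Lemma lcoset_center_conjg x y : x \in G -> y \in G -> ~ commute x y ->
  {subset x *: Z <= [:: x; x ^ y; x ^ y^-1]}.
Proof.
move=> xG yG nxy.
have nfix h : h \in G -> ~ commute x h -> x ^ h != x.
  by move=> hG nxh; rewrite conjg_fix; apply/commgP.
have nxy2 : x ^ y != x ^ y^-1.
  apply: contra_not_neq nxy => exy; apply/(commute_sqr yG)/commgP/conjg_fixP.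
  by rewrite expgS expg1 conjgM exy conjgKV.
have uniq_conj : uniq [:: x; x ^ y; x ^ y^-1].
  have nxyV : ~ commute x y^-1 by move/commuteV; rewrite invgK.
  by rewrite /= !inE !negb_or ![x == _]eq_sym !nfix ?groupV ?nxy2.
have sub_conj : [:: x; x ^ y; x ^ y^-1] \subset x *: Z.
  apply/subsetP=> w; rewrite !inE mem_lcoset => /or3P[] /eqP->.
  - by rewrite mulVg group1.
  - by rewrite conjg_mulR mulKg commg_center.
  - by rewrite conjg_mulR mulKg commg_center ?groupV.
move=> w; have /subset_cardP eq_conj := sub_conj; rewrite eq_conj ?card_lcoset ?card_center //.
by move/card_uniqP: uniq_conj => ->.
Qed.

Lemma center_prod_reorder (g1 g2 g3 g4 u : gT) : g1 \in G -> g3 \in G -> g4 \in G ->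
  u \in Z -> ~ commute g1 g3 -> g1 * g2 \in Z -> g3 * g4 \in Z ->
  u^-1 \in [:: g1 * g2 * g3 * g4; g1 * g3 * g2 * g4; g2 * g3 * g1 * g4].
Proof.
move=> g1G g3G g4G uZ n13 zZ g34Z; set z := g1 * g2 in zZ.
have g2E : g2 = g1^-1 * z by rewrite mulKg.
have c34 : commute g3 g4 by have := center_commute g3G g34Z; rewrite /commute -mulgA => /mulgI.
have wZ : u^-1 * (z * g4)^-1 \in g3 *: Z.
  rewrite mem_lcoset -!invgM groupV -mulgA -(center_commute g3G uZ) mulgA.
  by rewrite -(mulgA z) -c34 groupM // groupM.
have n31V : ~ commute g3 g1^-1 by move/commuteV; rewrite invgK => /commute_sym.
(* The three products are [g3 ^ h * (z * g4)] for [h = 1, g1^-1, g1]. *)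
have := lcoset_center_conjg g3G (groupVr g1G) n31V wZ.
rewrite invgK !inE => /or3P[] /eqP e; apply/or3P; [constructor 1 | constructor 2 | constructor 3];
  apply/eqP; rewrite -(mulgKV (z * g4) u^-1) e.
- by rewrite -/z mulgA (center_commute g3G zZ).
- by rewrite g2E conjgE invgK !mulgA.
- rewrite mulgA (center_commute (groupJ g3G g1G) zZ) g2E.
  by rewrite (center_commute (groupVr g1G) zZ) conjgE !mulgA.
Qed.

Lemma nth_seq_over T i : seq_over G T -> (i < size T)%N -> nth 1 T i \in G.
Proof. by move=> sT hi; apply/(allP sT)/mem_nth. Qed.

Lemma zclasses_of_nth T X : seq_over G T -> X \in zclasses_of G T ->
  exists2 i, (i < size T)%N & nth 1 T i \in G :\: Z /\ X = zclass G (nth 1 T i).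
Proof.
move=> sT /imsetP[x]; rewrite mem_filter => /andP[xZ xT] ->.
by exists (index x T); rewrite ?index_mem // nth_index // inE (allP sT x xT) andbT.
Qed.

Lemma zclasses2_noncommute T : seq_over G T -> (1 < #|zclasses_of G T|)%N ->
  exists i j, [/\ (i < size T)%N, (j < size T)%N & ~ commute (nth 1 T i) (nth 1 T j)].
Proof.
move=> sT /card_gt1P[X [Y [hX hY nXY]]].
have [i hi [xGZ eX]] := zclasses_of_nth sT hX.
have [j hj [yGZ eY]] := zclasses_of_nth sT hY.
by exists i, j; split=> //; apply: noncommute_zclass; rewrite -?eX -?eY.
Qed.

Lemma egz_zclasses4 T : seq_over G T -> central_product G T ->
  #|zclasses_of G T| = 4 -> EGZ G T.
Proof.
move=> sT cT; set S := zclasses_of G T; rewrite cardE => size4.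
move: size4 (enum_uniq S) (mem_enum S).
case: (enum _) => [|X1 [|X2 [|X3 [|X4 [|? ?]]]]] //= _.
rewrite !inE !negb_or => /and4P[/and3P[n12 n13 n14] /andP[n23 n24] n34 _] memX.
have [hX1 hX2 hX3 hX4] : [/\ X1 \in S, X2 \in S, X3 \in S & X4 \in S].
  by rewrite -!memX !inE !eqxx !orbT.
have [i1 hi1 [x1GZ eX1]] := zclasses_of_nth sT hX1.
have [i2 hi2 [x2GZ eX2]] := zclasses_of_nth sT hX2.
have [i3 hi3 [x3GZ eX3]] := zclasses_of_nth sT hX3.
have [i4 hi4 [x4GZ eX4]] := zclasses_of_nth sT hX4.
rewrite {}eX1 {}eX2 {}eX3 {}eX4 in n12 n13 n14 n23 n24 n34.
have /setDP[x1G _] := x1GZ; have /setDP[x2G _] := x2GZ.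
have /setDP[x3G _] := x3GZ; have /setDP[x4G _] := x4GZ.
have nc12 := noncommute_zclass x1GZ x2GZ n12.
have i12 : i1 != i2 by apply: contra_not_neq nc12 => ->; apply: commute_refl.
have [] := egz_triple_four x1G x2G x3G x4G nc12 (noncommute_zclass x1GZ x3GZ n13)
  (noncommute_zclass x1GZ x4GZ n14) (noncommute_zclass x2GZ x3GZ n23)
  (noncommute_zclass x2GZ x4GZ n24) (noncommute_zclass x3GZ x4GZ n34).
  exact: egz_nth.
exact: egz_nth.
Qed.

Lemma egz_thick T i j k p : seq_over G T -> central_product G T ->
  (1 < #|zclasses_of G T|)%N -> uniq [:: i; j; k; p] ->
  all (fun n => n < size T)%N [:: i; j; k; p] ->
  thick_triple (nth 1 T i) (nth 1 T j) (nth 1 T k) -> nth 1 T p \in G :\: Z ->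
  EGZ G T.
Proof.
move=> sT cT zcT uniq_ijkp /and5P[hi hj hk hp _] tabc dGZ.
move: uniq_ijkp; rewrite /= !inE !negb_or => /and4P[/and3P[ij ik ip] /andP[jk jp] kp _].
have [cab | /eqP nab] := eqVneq (nth 1 T i * nth 1 T j) (nth 1 T j * nth 1 T i).
  have [x [y [hx hy nxy]]] := zclasses2_noncommute sT zcT.
  have [xG yG] := (nth_seq_over sT hx, nth_seq_over sT hy).
  by case: (egz_triple_thick_commute_pair tabc cab xG yG nxy); apply: egz_nth.
by case: (egz_triple_thick_noncentral tabc nab dGZ); apply: egz_nth; rewrite // eq_sym.
Qed.

Lemma short3_cat U1 U2 : short3 G U1 -> short3 G U2 ->
  seq_over G (U1 ++ U2) /\ central_product G (U1 ++ U2).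
Proof.
case/and3P=> _ sU1 cU1 /and3P[_ sU2 cU2].
by split; [rewrite /seq_over all_cat; apply/andP | rewrite /central_product big_cat groupM].
Qed.

Lemma thick_type_triple U : short3 G U -> thick_type G U ->
  thick_triple (nth 1 U 0) (nth 1 U 1) (nth 1 U 2).
Proof.
case/and3P=> /eqP; case: U => [|a [|b [|c []]]] // _ sU cU thU.
have /and4P[aZ bZ cZ _] : all (fun x => x \notin Z) [:: a; b; c].
  by case/orP: thU => /andP[].
move: sU cU; rewrite /seq_over /central_product !big_cons big_nil mulg1 mulgA /=.
by case/and4P=> aG bG cG _ abcZ; rewrite /thick_triple !in_setD aZ bZ cZ aG bG cG abcZ.
Qed.

Lemma noncentral_nth U : seq_over G U -> ~~ central_type G U ->
  exists2 q, (q < size U)%N & nth 1 U q \in G :\: Z.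
Proof.
move=> sU; rewrite -has_predC => /(has_nthP 1)[q hq qZ].
by exists q; rewrite // in_setD (nth_seq_over sU hq) andbT.
Qed.

Lemma egz_cat_thickl U1 U2 : short3 G U1 -> short3 G U2 ->
  (1 < #|zclasses_of G (U1 ++ U2)|)%N -> thick_type G U1 -> ~~ central_type G U2 ->
  EGZ G (U1 ++ U2).
Proof.
move=> sU1 sU2 zcT thU1 nU2; have [sT cT] := short3_cat sU1 sU2.
have /and3P[/eqP oU1 _ _] := sU1; have /and3P[/eqP oU2 sU2' _] := sU2.
have [q hq dGZ] := noncentral_nth sU2' nU2; rewrite oU2 in hq.
apply: (egz_thick (i := 0%N) (j := 1%N) (k := 2%N) (p := (3 + q)%N) sT cT zcT).
- by [].
- by rewrite /= size_cat oU1 oU2 ltn_add2l hq.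
- by rewrite !nth_cat oU1; apply: thick_type_triple.
- by rewrite nth_cat oU1 ltnNge leq_addr addKn.
Qed.

Lemma egz_cat_thickr U1 U2 : short3 G U1 -> short3 G U2 ->
  (1 < #|zclasses_of G (U1 ++ U2)|)%N -> thick_type G U2 -> ~~ central_type G U1 ->
  EGZ G (U1 ++ U2).
Proof.
move=> sU1 sU2 zcT thU2 nU1; have [sT cT] := short3_cat sU1 sU2.
have /and3P[/eqP oU1 sU1' _] := sU1; have /and3P[/eqP oU2 _ _] := sU2.
have [q hq dGZ] := noncentral_nth sU1' nU1; rewrite oU1 in hq.
apply: (egz_thick (i := 3%N) (j := 4%N) (k := 5%N) (p := q) sT cT zcT).
- by rewrite /= !inE; case: q hq {dGZ} => [|[|[|]]].
- by rewrite /= size_cat oU1 oU2 (ltn_trans hq).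
- by rewrite !nth_cat oU1; apply: thick_type_triple.
- by rewrite nth_cat oU1 hq.
Qed.

End ExtraspecialOrder27.

Theorem lemma3p4 (gT : finGroupType) (G : {group gT}) :
  #|G| = 27 -> exponent G = 3 -> ~~ abelian G ->
  [/\ (* (a) *)
      (forall U1 U2 : seq gT,
         short3 G U1 -> short3 G U2 ->
         ~~ central_type G U1 -> ~~ central_type G U2 ->
         #|zclasses_of G (U1 ++ U2)| = 4 ->
         EGZ G (U1 ++ U2)),
      (* (b) *)
      (forall U1 U2 : seq gT,
         short3 G U1 -> short3 G U2 ->
         ~~ central_type G U1 -> ~~ central_type G U2 ->
         2 <= #|zclasses_of G (U1 ++ U2)| ->
         thick_type G U1 || thick_type G U2 ->
         EGZ G (U1 ++ U2)) &
      (* (c) *)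
      (forall g1 g2 g3 g4 u : gT,
         g1 \in G :\: 'Z(G) -> g2 \in G :\: 'Z(G) ->
         g3 \in G :\: 'Z(G) -> g4 \in G :\: 'Z(G) -> u \in 'Z(G) ->
         zclass G g1 != zclass G g3 ->
         g1 * g2 \in 'Z(G) -> g3 * g4 \in 'Z(G) ->
         exists s : 'S_4,
           (\prod_(i < 4) nth 1 [:: g1; g2; g3; g4] (s i)) * u = 1)].
Proof.
move=> oG expG nabG; split.
- move=> U1 U2 sU1 sU2 _ _; have [sT cT] := short3_cat sU1 sU2.
  exact: egz_zclasses4.
- move=> U1 U2 sU1 sU2 nU1 nU2 zcT /orP[thU1 | thU2].
    exact: egz_cat_thickl.
  exact: egz_cat_thickr.
move=> g1 g2 g3 g4 u g1GZ _ g3GZ /setDP[g4G _] uZ n13 z12 z34.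
have /setDP[g1G _] := g1GZ; have /setDP[g3G _] := g3GZ.
have nc13 := noncommute_zclass oG expG nabG g1GZ g3GZ n13.
have [e0 [s1 e1] [s2 e2]] := perm4_reorder g1 g2 g3 g4.
have := center_prod_reorder oG expG nabG g1G g3G g4G uZ nc13 z12 z34.
rewrite !inE => /or3P[] /eqP eu; [exists 1 | exists s1 | exists s2];
  by rewrite ?e0 ?e1 ?e2 -eu mulVg.
Qed.
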